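(* Let $m\ge d\ge1$, $\lambda=d/m$, and let $p$ be a monic polynomial of degree $d$ with nonnegative roots. Then \[ y^{m-d}p(xy)=e^{-\widehat{\mathcal R}(\partial_x\partial_y)}\{y^mx^d\},\qquad\text{where }\ \widehat{\mathcal R}(s):=d\int_0^s\frac{\mathcal R^{d,\lambda}_{\mathbb{S}p}\big(\frac{u}{md}\big)}{u}\,du . \] In particular $p$ is uniquely determined by $\mathcal R^{d,\lambda}_{\mathbb{S}p}$.
   Context: Write $p=\sum_{i=0}^d(-1)^ip_ix^{d-i}$ and $E_p(s)=\sum_{i=0}^d(-1)^i(md)^i\frac{(m-i)!(d-i)!}{m!d!}p_is^i$; $\mathcal R^{d,\lambda}_{\mathbb{S}p}(s)$ is the polynomial of degree $\le d$ (with zero constant term) agreeing with $-\frac sd\frac d{ds}\log E_p(s)$ mod $s^{d+1}$. The exponential of a differential operator is defined by its power series; only finitely many terms act nontrivially on $y^mx^d$. *)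

From HB Require Import structures.
From mathcomp Require Import all_boot all_order all_algebra.
Set Implicit Arguments. Unset Strict Implicit. Unset Printing Implicit Defensive.
Import Order.TTheory GRing.Theory Num.Theory.
Local Open Scope ring_scope.

Section Defs.
Variable R : fieldType.

(* p = \sum_i (-1)^i p_i x^(d-i), so p_i = (-1)^i * (coefficient of x^(d-i)). *)
Definition pcoef (d : nat) (p : {poly R}) (i : nat) : R :=
  (-1) ^+ i * p`_(d - i).

Definition Ep (m d : nat) (p : {poly R}) : {poly R} :=
  \poly_(i < d.+1)
    ((-1) ^+ i * ((m * d)%:R) ^+ i * ((m - i)`! * (d - i)`!)%:R
       / ((m`! * d`!)%:R) * pcoef d p i).

(* Truncated geometric series: if E`_0 = 1 then
   invTrunc n E * E = 1 mod s^(n+1), i.e. it is 1/E modulo s^(n+1). *)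
Definition invTrunc (n : nat) (E : {poly R}) : {poly R} :=
  \sum_(k < n.+1) (1 - E) ^+ k.

(* R^{d,lambda}_{Sp}(s): the polynomial of degree <= d (zero constant term)
   agreeing with -(s/d) (d/ds) log E_p(s) = -(s/d) E_p'(s)/E_p(s)
   modulo s^(d+1); computed as the truncation to degree <= d of
   -(1/d) s E_p'(s) (1/E_p mod s^(d+1)). *)
Definition RSp (m d : nat) (p : {poly R}) : {poly R} :=
  take_poly d.+1
    (- (d%:R)^-1 *: ('X * (Ep m d p)^`() * invTrunc d (Ep m d p))).

Definition polyint (q : {poly R}) : {poly R} :=
  \poly_(k < (size q).+1) (if k is k'.+1 then q`_k' / (k'.+1)%:R else 0).

(* Rhat(s) = d \int_0^s R(u/(md)) / u du; since R has zero constant term,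
   R(u/(md))/u is the polynomial (R \Po (u/(md))) %/ u. *)
Definition Rhat (m d : nat) (Rp : {poly R}) : {poly R} :=
  d%:R *: polyint ((Rp \Po (((m * d)%:R)^-1 *: 'X)) %/ 'X).

(* Bivariate polynomials: {poly {poly R}}, outer variable x, inner variable y. *)
Definition Dxy (f : {poly {poly R}}) : {poly {poly R}} :=
  map_poly (@deriv R) (deriv f).

Definition applyOp (Q : {poly R}) (f : {poly {poly R}}) : {poly {poly R}} :=
  \sum_(i < size Q) (Q`_i)%:P%:P * iter i Dxy f.

Definition expOp (Q : {poly R}) (N : nat) (f : {poly {poly R}}) : {poly {poly R}} :=
  \sum_(n < N) ((n`!)%:R^-1)%:P%:P * iter n (applyOp Q) f.

Definition monoYX (m d : nat) : {poly {poly R}} := ('X^m)%:P * 'X^d.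

Definition subst_xy (p : {poly R}) : {poly {poly R}} :=
  \poly_(j < size p) ((p`_j)%:P * 'X^j).

End Defs.

Definition nonneg_rooted (R : realFieldType) (p : {poly R}) : Prop :=
  exists rs : seq R, p = \prod_(r <- rs) ('X - r%:P) /\ all (fun r => 0 <= r) rs.

From HB Require Import structures.
From mathcomp Require Import all_boot all_order all_algebra.
From mathcomp Require Import ring.
Set Implicit Arguments. Unset Strict Implicit. Unset Printing Implicit Defensive.
Import Order.TTheory GRing.Theory Num.Theory.
Local Open Scope ring_scope.

(* The operators Q(d_x d_y) compose like the polynomials Q(s), so the partial
   sums of exp(-Rhat(d_x d_y)) act as F(d_x d_y), with F a partial sum of the
   series exp(-Rhat(s)); and (d_x d_y)^i y^m x^d = m^(i) d^(i) y^(m-i) x^(d-i)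
   with falling factorials.  As the coefficient of s^i in E_p(s/(md)), times
   m^(i) d^(i), is p_(d-i), the identity reduces to
   exp(-Rhat(s)) = E_p(s/(md)) mod s^(d+1).  Both sides solve
   f' = -Rhat'(s) f, f(0) = 1 mod s^d: the left one by the chain rule, the
   right one because R is -(s/d) times the logarithmic derivative of E_p; in
   characteristic 0 such solutions agree mod s^(d+1).  Uniqueness is read off the coefficients x^j y^j. *)

Section Operators.
Variable R : fieldType.
Implicit Types (P Q F : {poly R}) (f g : {poly {poly R}}) (c : R).

Lemma DxyD f g : Dxy (f + g) = Dxy f + Dxy g.
Proof. by rewrite /Dxy derivD raddfD. Qed.

Lemma DxyCM c f : Dxy (c%:P%:P * f) = c%:P%:P * Dxy f.
Proof.
rewrite /Dxy !mul_polyC derivZ; apply/polyP => i.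
rewrite coef_map_id0 ?raddf0 // !coefZ coef_map_id0 ?raddf0 //.
by rewrite !mul_polyC derivZ.
Qed.

Lemma iter_DxyCM n c f : iter n (@Dxy R) (c%:P%:P * f) = c%:P%:P * iter n (@Dxy R) f.
Proof. by elim: n => //= n ->; rewrite DxyCM. Qed.

Lemma applyOp_widen n Q f : (size Q <= n)%N ->
  applyOp Q f = \sum_(i < n) (Q`_i)%:P%:P * iter i (@Dxy R) f.
Proof.
move=> leQn; rewrite /applyOp.
rewrite (big_ord_widen _ (fun i => (Q`_i)%:P%:P * iter i (@Dxy R) f) leQn).
rewrite big_mkcond /=; apply: eq_bigr => i _; case: ltnP => // /(nth_default 0) ->.
by rewrite mul0r.
Qed.

Lemma applyOp0 f : applyOp 0 f = 0.
Proof. by rewrite /applyOp size_poly0 big_ord0. Qed.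

Lemma applyOpC c f : applyOp c%:P f = c%:P%:P * f.
Proof. by rewrite (@applyOp_widen 1) ?size_polyC_leq1 // big_ord1 coefC. Qed.

Lemma applyOp1 f : applyOp 1 f = f.
Proof. by rewrite -polyC1 applyOpC mul1r. Qed.

Lemma applyOpD P Q f : applyOp (P + Q) f = applyOp P f + applyOp Q f.
Proof.
set n := maxn (size P) (size Q).
rewrite (@applyOp_widen n (P + Q)); last exact: leq_trans (size_polyD _ _) _.
rewrite (@applyOp_widen n P) ?leq_maxl // (@applyOp_widen n Q) ?leq_maxr //.
by rewrite -big_split; apply: eq_bigr => i _; rewrite coefD !polyCD mulrDl.
Qed.

Lemma applyOpZ c P f : applyOp (c *: P) f = c%:P%:P * applyOp P f.
Proof.
rewrite (@applyOp_widen (size P)) ?size_scale_leq // big_distrr.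
by apply: eq_bigr => i _; rewrite coefZ !polyCM -mulrA.
Qed.

Lemma applyOp_sum (I : finType) (F : I -> {poly R}) f :
  applyOp (\sum_i F i) f = \sum_i applyOp (F i) f.
Proof. by elim/big_rec2: _ => [|i y1 y2 _ <-]; rewrite ?applyOp0 ?applyOpD. Qed.

Lemma applyOpCM Q c f : applyOp Q (c%:P%:P * f) = c%:P%:P * applyOp Q f.
Proof.
rewrite /applyOp big_distrr; apply: eq_bigr => i _.
by rewrite iter_DxyCM /= !mulrA [_%:P%:P * c%:P%:P]mulrC.
Qed.

Lemma applyOp0r Q : applyOp Q 0 = 0.
Proof. by rewrite -(mul0r 0) -polyC0 -polyC0 applyOpCM !mul0r. Qed.

Lemma applyOp_Dxy Q f : applyOp Q (Dxy f) = Dxy (applyOp Q f).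
Proof.
rewrite /applyOp; elim/big_rec2: _ => [|i y1 y2 _ ->].
  by rewrite /Dxy !raddf0.
by rewrite DxyD DxyCM -iterSr.
Qed.

Lemma applyOpMX P f : applyOp (P * 'X) f = applyOp P (Dxy f).
Proof.
have [->|P0] := eqVneq P 0; first by rewrite mul0r !applyOp0.
rewrite /applyOp size_mulX // big_ord_recl coefMX /= mul0r add0r.
by apply: eq_bigr => i _; rewrite coefMX /= -iterSr.
Qed.

Lemma applyOpM P Q f : applyOp (P * Q) f = applyOp P (applyOp Q f).
Proof.
elim/poly_ind: P f => [|P a IH] f; first by rewrite mul0r !applyOp0.
by rewrite mulrDl mulrAC applyOpD applyOpMX IH mul_polyC applyOpZ applyOpD
  applyOpMX applyOpC applyOp_Dxy.
Qed.

Lemma applyOpXn n f : applyOp 'X^n f = iter n (@Dxy R) f.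
Proof.
elim: n f => [|n IH] f; first by rewrite expr0 applyOp1.
by rewrite exprSr applyOpMX IH iterSr.
Qed.

Definition trunc_exp N Q : {poly R} := \sum_(n < N) (n`!%:R)^-1 *: Q ^+ n.

Lemma expOpE Q N f : expOp Q N f = applyOp (trunc_exp N Q) f.
Proof.
rewrite /trunc_exp applyOp_sum; apply: eq_bigr => n _.
have iter_applyOp k : iter k (applyOp Q) f = applyOp (Q ^+ k) f.
  by elim: k => [|k IH]; rewrite ?expr0 ?applyOp1 // iterS IH exprS applyOpM.
by rewrite applyOpZ iter_applyOp.
Qed.

Definition cmonoYX c (a b : nat) : {poly {poly R}} := (c *: 'X^a) *: 'X^b.

Lemma monoYXE m d : monoYX R m d = cmonoYX 1 m d.
Proof. by rewrite /monoYX /cmonoYX mul_polyC scale1r. Qed.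

Lemma polyCCM_cmonoYX c' c a b : c'%:P%:P * cmonoYX c a b = cmonoYX (c' * c) a b.
Proof. by rewrite /cmonoYX mul_polyC scalerA mul_polyC scalerA. Qed.

Lemma Dxy_cmonoYX c a b : Dxy (cmonoYX c a b) = cmonoYX (c *+ (a * b)) a.-1 b.-1.
Proof.
apply/polyP => k; rewrite /Dxy /cmonoYX coef_map_id0 ?raddf0 // coef_deriv.
rewrite !coefZ !coefXn.
case: b => [|b] /=; first by rewrite mulr0 mul0rn raddf0 muln0 mulr0n scale0r mul0r.
rewrite eqSS; case: eqP => [->|_]; last by rewrite !mulr0 mul0rn raddf0.
rewrite !mulr1 derivMn derivZ derivXn.
by rewrite scalerMnl -scalerMnr scalerMnl -mulrnA [(b.+1 * a)%N]mulnC.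
Qed.

Lemma iter_Dxy_cmonoYX i c a b :
  iter i (@Dxy R) (cmonoYX c a b) = cmonoYX (c *+ (a ^_ i * b ^_ i)) (a - i) (b - i).
Proof.
elim: i => [|i IH]; first by rewrite /= !subn0 mulr1n.
rewrite iterS IH Dxy_cmonoYX -!subnS -mulrnA !ffactnSr.
by rewrite [(a ^_ i * (a - i) * _)%N]mulnACA.
Qed.

Lemma applyOp_monoYX F m d : applyOp F (monoYX R m d)
  = \sum_(i < d.+1) cmonoYX (F`_i *+ (m ^_ i * d ^_ i)) (m - i) (d - i).
Proof.
have vanish : applyOp 'X^(d.+1) (monoYX R m d) = 0.
  rewrite applyOpXn monoYXE iter_Dxy_cmonoYX [d ^_ _]ffact_small // muln0 mulr0n.
  by rewrite /cmonoYX !scale0r.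
rewrite -{1}(poly_take_drop d.+1 F) applyOpD applyOpM vanish applyOp0r addr0.
rewrite (@applyOp_widen d.+1) ?size_take_poly //.
apply: eq_bigr => i _; rewrite coef_take_poly ltn_ord monoYXE iter_Dxy_cmonoYX.
by rewrite polyCCM_cmonoYX mulr_natr.
Qed.

Lemma coef_subst_xy (p : {poly R}) j : ((subst_xy p)`_j)`_j = p`_j.
Proof.
rewrite /subst_xy coef_poly; case: ltnP => [_|le_pj]; last by rewrite coef0 nth_default.
by rewrite coefCM coefXn eqxx mulr1.
Qed.

End Operators.

Section TruncatedSeries.
Variable R : fieldType.
Implicit Types (E P : {poly R}) (c : R).

Lemma dvdpX_coef0 P : ('X %| P) = (P`_0 == 0).
Proof. by rewrite -[X in X %| _]subr0 dvdp_XsubCl /root horner_coef0. Qed.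

Lemma dvdpXn_coef n P k : 'X^n %| P -> (k < n)%N -> P`_k = 0.
Proof. by case/dvdpP => Q -> ltkn; rewrite coefMXn ltkn. Qed.

Lemma dvdpXn_sub_take_poly n P : 'X^n %| P - take_poly n P.
Proof. by rewrite -{1}(poly_take_drop n P) addrC addKr dvdp_mull. Qed.

Lemma coef_comp_polyZX c P k : (P \Po (c *: 'X))`_k = c ^+ k * P`_k.
Proof.
elim/poly_ind: P k => [|P a IH] k; first by rewrite comp_poly0 !coef0 mulr0.
rewrite comp_polyD comp_polyM comp_polyX comp_polyC -scalerAr !coefD !coefC.
case: k => [|k]; rewrite coefZ !coefMX /= ?IH.
  by rewrite mulr0 expr0 !add0r mul1r.
by rewrite !addr0 exprS mulrA.
Qed.

Lemma dvdpXn_comp_polyZX n c P : 'X^n %| P -> 'X^n %| P \Po (c *: 'X).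
Proof.
case/dvdpP => Q ->; rewrite comp_polyM rmorphXn /= comp_polyX exprZn.
by rewrite -[_ *: 'X^n]mul_polyC mulrA dvdp_mulIr.
Qed.

Lemma X_deriv_comp_polyZX c P :
  'X * (P \Po (c *: 'X))^`() = ('X * P^`()) \Po (c *: 'X).
Proof.
by rewrite deriv_comp derivZ derivX comp_polyM comp_polyX alg_polyC -mul_polyC; ring.
Qed.

Lemma invTruncMr n E : E`_0 = 1 -> 'X^(n.+1) %| invTrunc n E * E - 1.
Proof.
move=> E0; have -> : invTrunc n E * E - 1 = - (1 - E) ^+ n.+1.
  rewrite /invTrunc -[E in _ * E](subKr 1) -[(1 - E) ^+ n.+1](subrK 1) subrX1.
  by ring.
by rewrite dvdpNr dvdp_exp2r // dvdpX_coef0 coefB coef1 E0 subrr.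
Qed.

Lemma dvdpXn_take_logderiv n a E : E`_0 = 1 ->
  'X^(n.+1) %| take_poly n.+1 (- a *: ('X * E^`() * invTrunc n E)) * E
             + a *: ('X * E^`()).
Proof.
move=> E0; set W := - a *: _.
have -> : take_poly n.+1 W * E + a *: ('X * E^`()) =
   - ((W - take_poly n.+1 W) * E) - a%:P * ('X * E^`() * (invTrunc n E * E - 1)).
  by rewrite /W -!mul_polyC; ring.
apply: dvdp_sub; first by rewrite dvdpNr dvdp_mulr ?dvdpXn_sub_take_poly.
by rewrite !dvdp_mull ?invTruncMr.
Qed.

Lemma coef0_polyint P : (polyint P)`_0 = 0.
Proof. by rewrite /polyint coef_poly; case: (0 < _)%N. Qed.

End TruncatedSeries.

Section CharacteristicZero.
Variable R : numFieldType.
Implicit Types (A L P Z : {poly R}).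

Lemma deriv_polyint P : (polyint P)^`() = P.
Proof.
apply/polyP => i; rewrite coef_deriv /polyint coef_poly ltnS.
case: ltnP => [_|le_pi]; last by rewrite mul0rn nth_default.
by rewrite -mulr_natr; field; rewrite addrC natr1 pnatr_eq0.
Qed.

Lemma ode_unique n A Z : 'X %| Z -> 'X^n %| Z^`() - A * Z -> 'X^(n.+1) %| Z.
Proof.
elim: n => [|n IH] XZ ode; first by rewrite expr1.
have /dvdpP [W defZ] : 'X^(n.+1) %| Z.
  exact: IH (dvdp_trans (dvdp_exp2l 'X (leqnSn n)) ode).
have Xk_neq0 k : 'X^k != 0 :> {poly R} by rewrite monic_neq0 ?monicXn.
move: ode; rewrite defZ derivM derivXn /= addrAC dvdp_addr; last first.
  by apply: dvdp_sub; rewrite ?mulrA dvdp_mulIr.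
rewrite mulrnAr -mulrnAl [in X in X %| _]exprS dvdp_mul2r // -scaler_nat.
rewrite dvdpZr ?pnatr_eq0 // => XW.
by rewrite [in X in X %| _]exprS dvdp_mul2r.
Qed.

Lemma deriv_trunc_exp N L : (trunc_exp N.+1 L)^`() = L^`() * trunc_exp N L.
Proof.
rewrite /trunc_exp raddf_sum big_ord_recl /= derivZ deriv_exp mulr0n scaler0 add0r.
rewrite mulr_sumr; apply: eq_bigr => i _; rewrite derivZ deriv_exp /= -scalerAr.
by rewrite -scaler_nat scalerA factS natrM invfM mulrAC mulVf ?mul1r ?pnatr_eq0.
Qed.

Lemma trunc_exp_ode N L :
  'X %| L -> 'X^N %| (trunc_exp N.+1 L)^`() - L^`() * trunc_exp N.+1 L.
Proof.
move=> XL; rewrite deriv_trunc_exp {2}/trunc_exp big_ord_recr /= -/(trunc_exp N L).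
rewrite mulrDr opprD addrA subrr add0r dvdpNr -scalerAr -mul_polyC.
by rewrite !dvdp_mull ?dvdp_exp2r.
Qed.

Lemma coef0_trunc_exp N L : 'X %| L -> (trunc_exp N.+1 L)`_0 = 1.
Proof.
move=> XL; rewrite /trunc_exp big_ord_recl coefD coef_sum big1 ?addr0.
  by rewrite coefZ expr0 coef1 invr1 mulr1.
move=> i _; apply/eqP; rewrite coefZ mulf_eq0 -dvdpX_coef0.
by rewrite dvdp_exp ?orbT.
Qed.

End CharacteristicZero.

Section Identity.
Variables (R : numFieldType) (m d : nat) (p : {poly R}).
Hypotheses (d_gt0 : (0 < d)%N) (leq_dm : (d <= m)%N).
Hypotheses (p_monic : p \is monic) (size_p : size p = d.+1).

Local Notation E := (Ep m d p).
Local Notation Rp := (RSp m d p).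
Local Notation L := (- Rhat m d Rp).
Local Notation c := ((m * d)%:R^-1 : R).
Local Notation dil P := (P \Po (c *: 'X)).

Lemma coef0_Ep : E`_0 = 1.
Proof.
have pd : p`_d = 1 by move/monicP: p_monic; rewrite /lead_coef size_p.
rewrite /Ep coef_poly /= /pcoef !subn0 !expr0 !mul1r pd mulr1 divff //.
by rewrite pnatr_eq0 -lt0n muln_gt0 !fact_gt0.
Qed.

Lemma RSp_logderiv : 'X^(d.+1) %| Rp * E + d%:R^-1 *: ('X * E^`()).
Proof. exact: dvdpXn_take_logderiv coef0_Ep. Qed.

Lemma coef0_RSp : Rp`_0 = 0.
Proof. by rewrite /RSp coef_take_poly /= coefZ -!mulrA coefXM mulr0. Qed.

Lemma deriv_Rhat : L^`() * 'X = - (d%:R *: dil Rp).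
Proof.
rewrite derivN /Rhat derivZ deriv_polyint mulNr -scalerAl divpK // dvdpX_coef0.
by rewrite coef_comp_polyZX coef0_RSp mulr0.
Qed.

Lemma dil_Ep_ode : 'X^d %| (dil E)^`() - L^`() * dil E.
Proof.
have d_neq0 : d%:R != 0 :> R by rewrite pnatr_eq0 -lt0n.
rewrite -(@dvdp_mul2r _ 'X) ?polyX_eq0 // -exprSr.
have -> : ((dil E)^`() - L^`() * dil E) * 'X =
    d%:R *: (dil Rp * dil E + d%:R^-1 *: ('X * (dil E)^`())).
  rewrite mulrBl mulrAC deriv_Rhat scalerDr scalerA mulfV // scale1r.
  by rewrite -!mul_polyC; ring.
rewrite -mul_polyC dvdp_mull // X_deriv_comp_polyZX.
rewrite -comp_polyZ -comp_polyM -comp_polyD.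
exact: dvdpXn_comp_polyZX RSp_logderiv.
Qed.

Lemma trunc_exp_Rhat N : (d <= N)%N -> 'X^(d.+1) %| trunc_exp N.+1 L - dil E.
Proof.
move=> leq_dN; have XL : 'X %| L.
  by rewrite dvdpX_coef0 coefN /Rhat coefZ coef0_polyint mulr0 oppr0.
apply: (@ode_unique _ d (L^`())).
  by rewrite dvdpX_coef0 coefB coef0_trunc_exp // coef_comp_polyZX coef0_Ep mulr1 subrr.
have -> : (trunc_exp N.+1 L - dil E)^`() - L^`() * (trunc_exp N.+1 L - dil E) =
    ((trunc_exp N.+1 L)^`() - L^`() * trunc_exp N.+1 L)
    - ((dil E)^`() - L^`() * dil E) by rewrite derivB; ring.
rewrite dvdp_sub ?dil_Ep_ode //.
exact: dvdp_trans (dvdp_exp2l 'X leq_dN) (trunc_exp_ode N XL).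
Qed.

Lemma Ep_coef_ffact i :
  (i <= d)%N -> c ^+ i * E`_i *+ (m ^_ i * d ^_ i) = p`_(d - i).
Proof.
move=> le_id; have le_im : (i <= m)%N by apply: leq_trans leq_dm.
rewrite /Ep coef_poly ltnS le_id /pcoef.
have fact_split :
    (m`! * d`!)%:R = ((m - i)`! * (d - i)`!)%:R * (m ^_ i * d ^_ i)%:R :> R.
  by rewrite -natrM -(ffact_fact le_im) -(ffact_fact le_id); congr _%:R; ring.
have sign2 : (-1) ^+ i * (-1) ^+ i = 1 :> R by rewrite -exprMn mulrNN mulr1 expr1n.
rewrite -mulr_natr fact_split exprVn.
transitivity ((-1) ^+ i * (-1) ^+ i * p`_(d - i)); last by rewrite sign2 mul1r.
field.
rewrite expf_neq0 ?pnatr_eq0 -?lt0n ?muln_gt0 ?fact_gt0 ?ffact_gt0 ?le_im ?le_id //.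
by rewrite d_gt0 (leq_trans d_gt0 leq_dm).
Qed.

Lemma monoYX_subst_xy : ('X^(m - d))%:P * subst_xy p
   = \sum_(i < d.+1) cmonoYX p`_(d - i) (m - i) (d - i).
Proof.
rewrite /subst_xy size_p poly_def mul_polyC scaler_sumr (reindex_inj rev_ord_inj) /=.
apply: eq_bigr => i _; rewrite subSS /cmonoYX scalerA mul_polyC -scalerAr -exprD.
by rewrite addnBA ?subnK // -ltnS.
Qed.

Lemma expOp_Rhat_monoYX N : (d < N)%N ->
  expOp L N (monoYX R m d) = ('X^(m - d))%:P * subst_xy p.
Proof.
case: N => // N; rewrite ltnS => leq_dN.
rewrite expOpE applyOp_monoYX monoYX_subst_xy; apply: eq_bigr => i _.
rewrite -(Ep_coef_ffact (ltn_ord i)) -coef_comp_polyZX; congr (cmonoYX (_ *+ _) _ _).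
by apply/eqP; rewrite -subr_eq0 -coefB (dvdpXn_coef (trunc_exp_Rhat leq_dN)).
Qed.

End Identity.

Theorem mainTheorem15 (R : realFieldType) (m d : nat) (p : {poly R}) :
  (1 <= d)%N -> (d <= m)%N ->
  p \is monic -> size p = d.+1 -> nonneg_rooted p ->
  (exists N0 : nat, forall N : nat, (N0 <= N)%N ->
     expOp (- Rhat m d (RSp m d p)) N (monoYX R m d)
     = ('X^(m - d))%:P * subst_xy p)
  /\
  (forall q : {poly R},
     q \is monic -> size q = d.+1 -> nonneg_rooted q ->
     RSp m d q = RSp m d p -> q = p).
Proof.
move=> d_gt0 leq_dm p_monic size_p _; split.
  by exists d.+1 => N; apply: expOp_Rhat_monoYX.
move=> q q_monic size_q _ RSp_qp.
have := expOp_Rhat_monoYX d_gt0 leq_dm q_monic size_q (ltnSn d).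
rewrite RSp_qp (expOp_Rhat_monoYX d_gt0 leq_dm p_monic size_p (ltnSn d)).
have Xmd_neq0 : ('X^(m - d))%:P != 0 :> {poly {poly R}}.
  by rewrite polyC_eq0 monic_neq0 ?monicXn.
move=> /(mulfI Xmd_neq0) eq_subst; apply/polyP => j.
by rewrite -(coef_subst_xy q) -eq_subst coef_subst_xy.
Qed.
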